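(* Let $P$ be an instance of $k$-means clustering with $z$ outliers, $|P|=n$, let $\delta,\xi\in(0,1)$, let $S$ be a finite multiset of points of $P$ satisfying, for every $1\le j\le k$, $$\sum_{q\in S\cap C^*_j}\|q-o^*_j\|^2\le(1+\delta)\frac{|S|}{n}\Big(\sum_{p\in C^*_j}\|p-o^*_j\|^2+\xi|C^*_j|\mathcal{L}^2\Big),$$ let $0<z'<|S|$ with $|S\setminus P_{opt}|\le z'$, let $H$ be a set of $k$ centers in $\mathbb{R}^D$ with $\Delta^{-z'}_2(S,H)\le c\cdot\min_{|H'|=k}\Delta^{-z'}_2(S,H')$ for some $c\ge1$, and let $S_{in}\subseteq S$ be the $|S|-z'$ points of $S$ attaining $\Delta^{-z'}_2(S,H)$ (i.e., $S$ minus its $z'$ points farthest from $H$). Then $$Cost(S_{in}\cap P_{opt},H)\le(1+\delta)\frac{|S|}{n}\cdot c\cdot\big(Cost(P_{opt},O^* )+(n-z)\xi\mathcal{L}^2\big).$$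
   Context: $P\subset\mathbb{R}^D$, $0<z<n$. $dist(p,H)=\min_{q\in H}\|p-q\|$; for a finite multiset $Q$ and $0<w<|Q|$, $\Delta^{-w}_2(Q,H)=\min\{\frac{1}{|Q'|}\sum_{p\in Q'}dist(p,H)^2:Q'\subseteq Q,|Q'|=|Q|-w\}$; $Cost(X,Y)=\sum_{q\in X}dist(q,Y)^2$ (with multiplicity). $P_{opt}\subset P$ with $|P_{opt}|=n-z$ is the set of inliers of an optimal solution of $k$-means with $z$ outliers, $C^*_1,\dots,C^*_k$ the optimal clusters forming $P_{opt}$, $o^*_j$ the mean of $C^*_j$, $O^*=\{o^*_1,\dots,o^*_k\}$, $\mathcal{L}=\max_j\max_{p,q\in C^*_j}\|p-q\|$. *)

From mathcomp Require Import all_boot all_order all_algebra reals.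
Set Implicit Arguments. Unset Strict Implicit. Unset Printing Implicit Defensive.
Import Order.TTheory GRing.Theory Num.Theory.
Local Open Scope ring_scope.

Section KMeansDefs.
Variables (R : realType) (D : nat).

Definition point := 'rV[R]_D.

Definition sqnorm (v : point) : R := \sum_(i < D) (v ord0 i) ^+ 2.
Definition sqdist (p q : point) : R := sqnorm (p - q).
Definition edist (p q : point) : R := Num.sqrt (sqdist p q).

(* dist(p,H)^2 = min_{j} ||p - H j||^2, for a family H of k centers.
   The seed of the min is the sum of all terms, which is >= each
   (nonnegative) term, so for k >= 1 this is exactly the minimum. *)
Definition dist2 (k : nat) (H : 'I_k -> point) (p : point) : R :=
  \big[Num.min/ \sum_(j < k) sqdist p (H j)]_(j < k) sqdist p (H j).

(* Cost(X,H) for a multiset X of points (given as a seq, with multiplicity) *)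
Definition cost (k : nat) (X : seq point) (H : 'I_k -> point) : R :=
  \sum_(p <- X) dist2 H p.

(* min over sub-multisets Q' of Q with |Q'| = |Q| - w of Cost(Q',H);
   sub-multisets are given by masks. The seed Cost(Q,H) is >= every
   candidate, so this is the minimum. *)
Definition trimmed_cost (k : nat) (Q : seq point) (w : nat) (H : 'I_k -> point) : R :=
  \big[Num.min/ cost Q H]_(m : (size Q).-tuple bool | count id m == (size Q - w)%N)
     cost (mask m Q) H.

Definition Delta2 (k : nat) (Q : seq point) (w : nat) (H : 'I_k -> point) : R :=
  trimmed_cost Q w H / (size Q - w)%:R.

Definition cluster (n k : nat) (Popt : {set 'I_n}) (sigma : 'I_n -> 'I_k) (j : 'I_k)
  : {set 'I_n} := [set i in Popt | sigma i == j].

(* L = max_j max_{p,q in C_j} ||p - q|| (0 if all clusters are empty) *)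
Definition diamL (n k : nat) (x : 'I_n -> point) (Popt : {set 'I_n})
  (sigma : 'I_n -> 'I_k) : R :=
  \big[Num.max/0]_(j < k) \big[Num.max/0]_(p in cluster Popt sigma j)
     \big[Num.max/0]_(q in cluster Popt sigma j) edist (x p) (x q).

End KMeansDefs.

From mathcomp Require Import all_boot all_order all_algebra reals.
Import Order.TTheory GRing.Theory Num.Theory.
Set Implicit Arguments. Unset Strict Implicit. Unset Printing Implicit Defensive.
Local Open Scope ring_scope.

(* Write S_in for the trimmed sample and O for the optimal centers.  Dropping
   the outliers only lowers the cost, and Cost(S_in, H) = (|S| - z') Delta(S, H)
   is at most c times the best trimmed cost of S for the centers O.  Since at
   most z' points of S are outliers, the inliers of S contain a sub-multiset
   of size |S| - z', so that trimmed cost is at most the O-cost of the inliers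
   of S.  Every inlier is served by its own cluster center, so this cost splits
   over the clusters, where the sampling hypothesis bounds each piece. *)

Lemma sum_subseq_le (R : numDomainType) (T : eqType) (f : T -> R) (s1 s2 : seq T) :
  (forall y, 0 <= f y) -> subseq s1 s2 -> \sum_(y <- s1) f y <= \sum_(y <- s2) f y.
Proof.
move=> f_ge0 /subseqP[b _ ->].
rewrite big_mask (big_tnth _ _ s2).
rewrite [leRHS](bigID (fun i : 'I_(size s2) => nth false b i)) /=.
under eq_bigl do rewrite andbT.
by rewrite lerDl sumr_ge0.
Qed.

Section TrimmedCost.
Variables (R : realType) (D k : nat).
Implicit Types (H : 'I_k -> point R D) (p q : point R D) (Q X Y : seq (point R D)).

Lemma sqdist_ge0 p q : 0 <= sqdist p q.
Proof. by apply: sumr_ge0 => i _; exact: sqr_ge0. Qed.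

Lemma dist2_le_sqdist H p j : dist2 H p <= sqdist p (H j).
Proof. by rewrite /dist2 (bigD1 j) //= ge_min lexx. Qed.

Lemma dist2_ge H p (a : R) :
  (forall j, a <= sqdist p (H j)) -> a <= \sum_j sqdist p (H j) -> a <= dist2 H p.
Proof.
move=> a_le a_le_seed; apply: (big_ind (fun v => a <= v)) => // u v a_le_u a_le_v.
by rewrite le_min a_le_u a_le_v.
Qed.

Lemma dist2_ge0 H p : 0 <= dist2 H p.
Proof. by apply: dist2_ge => [j|]; [|apply: sumr_ge0 => j _]; exact: sqdist_ge0. Qed.

Lemma dist2_nearest H p j0 :
  (forall j, sqdist p (H j0) <= sqdist p (H j)) -> dist2 H p = sqdist p (H j0).
Proof.
move=> nearest; apply/le_anti; rewrite dist2_le_sqdist dist2_ge //.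
by rewrite (bigD1 j0) //= lerDl sumr_ge0 // => j _; exact: sqdist_ge0.
Qed.

Lemma cost_subseq_le X Y H : subseq X Y -> cost X H <= cost Y H.
Proof. exact/sum_subseq_le/dist2_ge0. Qed.

Lemma trimmed_cost_le_mask Q w H (b : bitseq) :
  size b = size Q -> count id b = (size Q - w)%N ->
  trimmed_cost Q w H <= cost (mask b Q) H.
Proof.
move=> /eqP size_b count_b.
by rewrite /trimmed_cost (bigD1 (Tuple size_b)) /= ?count_b // ge_min lexx.
Qed.

Lemma trimmed_cost_le_subseq Q w H X :
  subseq X Q -> (size Q - w <= size X)%N -> trimmed_cost Q w H <= cost X H.
Proof.
move=> sub_XQ size_X.
have /subseqP[b size_b take_X] := subseq_trans (take_subseq X (size Q - w)) sub_XQ.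
have count_b : count id b = (size Q - w)%N.
  by rewrite -(size_mask size_b) -take_X size_take_min; exact/minn_idPl.
apply: le_trans (trimmed_cost_le_mask H size_b count_b) _.
by rewrite -take_X cost_subseq_le // take_subseq.
Qed.

Lemma cost_mask_le_approx Q w H H' (c : R) (b : bitseq) :
  (w < size Q)%N ->
  cost (mask b Q) H / (size Q - w)%:R = Delta2 Q w H ->
  Delta2 Q w H <= c * Delta2 Q w H' ->
  cost (mask b Q) H <= c * trimmed_cost Q w H'.
Proof.
move=> w_lt attains approx.
have N_gt0 : 0 < ((size Q - w)%:R)^-1 :> R by rewrite invr_gt0 ltr0n subn_gt0.
by rewrite -(ler_pM2r N_gt0) -mulrA attains.
Qed.

End TrimmedCost.

Section Clusters.
Variables (R : realType) (D n k : nat) (x : 'I_n -> point R D).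
Variables (Popt : {set 'I_n}) (sigma : 'I_n -> 'I_k) (O : 'I_k -> point R D).
Local Notation C := (cluster Popt sigma).

Lemma sum_over_clusters (s : seq 'I_n) (g : 'I_n -> 'I_k -> R) :
  \sum_(j < k) \sum_(i <- s | i \in C j) g i j = \sum_(i <- s | i \in Popt) g i (sigma i).
Proof.
rewrite [RHS](eq_bigr (fun i => \sum_(j | j == sigma i) g i j)); last first.
  by move=> i _; rewrite big_pred1_eq.
rewrite [RHS](exchange_big_dep predT) //=.
by apply: eq_bigr => j _; apply: eq_bigl => i; rewrite inE eq_sym.
Qed.

Lemma sum_card_clusters : \sum_(j < k) (#|C j|%:R : R) = #|Popt|%:R.
Proof.
under eq_bigr do rewrite -sumr_const.
by rewrite (sum_over_clusters _ (fun _ _ => 1)) sumr_const.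
Qed.

Hypothesis sigma_nearest : forall i, i \in Popt -> forall j,
  sqdist (x i) (O (sigma i)) <= sqdist (x i) (O j).

Lemma sum_dist2_inliers (s : seq 'I_n) :
  \sum_(i <- s | i \in Popt) dist2 O (x i)
  = \sum_(i <- s | i \in Popt) sqdist (x i) (O (sigma i)).
Proof. by apply: eq_bigr => i /sigma_nearest; exact: dist2_nearest. Qed.

Lemma sample_inliers_cost_le (S : seq 'I_n) (a e l : R) : 0 <= a ->
  (forall j, \sum_(i <- S | i \in C j) sqdist (x i) (O j)
             <= a * (\sum_(i in C j) sqdist (x i) (O j) + e * #|C j|%:R * l)) ->
  cost [seq x i | i <- S & i \in Popt] O
  <= a * (cost [seq x i | i <- enum Popt] O + #|Popt|%:R * e * l).
Proof.
move=> a_ge0 sample_bound.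
rewrite /cost !big_map big_filter big_enum /= !sum_dist2_inliers.
rewrite -!(sum_over_clusters _ (fun i j => sqdist (x i) (O j))).
apply: le_trans (ler_sum _ (fun j _ => sample_bound j)) _.
rewrite -mulr_sumr ler_wpM2l // big_split /= -sum_card_clusters !mulr_suml.
by rewrite lerD //; apply: ler_sum => j _; rewrite [e * _]mulrC.
Qed.

End Clusters.

Theorem lemma9 (R : realType) (D n k z : nat)
  (* the instance P = {x i | i < n} in R^D, |P| = n *)
  (x : 'I_n -> 'rV[R]_D) (x_inj : injective x)
  (k_gt0 : (0 < k)%N) (z_gt0 : (0 < z)%N) (z_ltn : (z < n)%N)
  (* an optimal solution: inliers Popt, centers O, clusters C j *)
  (Popt : {set 'I_n}) (O : 'I_k -> 'rV[R]_D) (sigma : 'I_n -> 'I_k)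
  (Popt_card : #|Popt| = (n - z)%N)
  (opt : forall (I' : {set 'I_n}) (H' : 'I_k -> 'rV[R]_D),
      #|I'| = (n - z)%N ->
      cost [seq x i | i <- enum Popt] O <= cost [seq x i | i <- enum I'] H')
  (sigma_nearest : forall i, i \in Popt -> forall j : 'I_k,
      sqdist (x i) (O (sigma i)) <= sqdist (x i) (O j))
  (O_mean : forall j : 'I_k,
      cluster Popt sigma j != set0 ->
      O j = (#|cluster Popt sigma j|%:R)^-1 *:
              \sum_(i in cluster Popt sigma j) x i)
  (delta xi c : R)
  (delta_gt0 : 0 < delta) (delta_lt1 : delta < 1)
  (xi_gt0 : 0 < xi) (xi_lt1 : xi < 1)
  (* the multiset S of points of P, given by indices with multiplicity *)
  (S : seq 'I_n)
  (HS : forall j : 'I_k,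
      \sum_(i <- S | i \in cluster Popt sigma j) sqdist (x i) (O j)
      <= (1 + delta) * ((size S)%:R / n%:R) *
         (\sum_(i in cluster Popt sigma j) sqdist (x i) (O j)
          + xi * #|cluster Popt sigma j|%:R *
            diamL x Popt sigma ^+ 2))
  (z' : nat) (z'_gt0 : (0 < z')%N) (z'_lt : (z' < size S)%N)
  (HSout : (count (fun i => i \notin Popt) S <= z')%N)
  (H : 'I_k -> 'rV[R]_D) (c_ge1 : 1 <= c)
  (H_approx : forall H' : 'I_k -> 'rV[R]_D,
      Delta2 [seq x i | i <- S] z' H <= c * Delta2 [seq x i | i <- S] z' H')
  (* S_in = mask m S : |S| - z' points of S attaining Delta(S,H) *)
  (m : (size S).-tuple bool)
  (m_card : count id m = (size S - z')%N)
  (m_attains : cost [seq x i | i <- mask m S] H / (size S - z')%:R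
               = Delta2 [seq x i | i <- S] z' H) :
  cost [seq x i | i <- mask m S & i \in Popt] H
  <= (1 + delta) * ((size S)%:R / n%:R) * c *
     (cost [seq x i | i <- enum Popt] O
      + (n - z)%:R * xi *
        diamL x Popt sigma ^+ 2).
Proof.
set Sx := [seq x i | i <- S].
have c_ge0 : 0 <= c by apply: le_trans c_ge1.
have A_ge0 : 0 <= (1 + delta) * ((size S)%:R / n%:R).
  by rewrite mulr_ge0 ?divr_ge0 // addr_ge0 // ltW.
have drop_outliers :=
  cost_subseq_le H (map_subseq x (filter_subseq (mem Popt) (mask m S))).
have trim_approx : cost [seq x i | i <- mask m S] H <= c * trimmed_cost Sx z' O.
  by rewrite map_mask; apply: cost_mask_le_approx; rewrite ?size_map // -map_mask.
have many_inliers : (size Sx - z' <= size [seq x i | i <- S & i \in Popt])%N.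
  rewrite !size_map size_filter leq_subLR -(count_predC (mem Popt) S).
  by rewrite addnC leq_add2r.
have trim_inliers :=
  trimmed_cost_le_subseq O (map_subseq x (filter_subseq (mem Popt) S)) many_inliers.
have sample := sample_inliers_cost_le sigma_nearest A_ge0 HS.
rewrite Popt_card in sample.
rewrite [_ * c]mulrC -[leRHS]mulrA (le_trans drop_outliers) // (le_trans trim_approx) //.
exact: ler_wpM2l c_ge0 _ _ (le_trans trim_inliers sample).
Qed.
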